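(* For any weighted finite graph $G$ with $N$ vertices and each $1\leq k\leq N$, \[ \lambda_{N-k+1}\geq 2\overline{h}^*(k). \]
   Context: $G=(V,E,w)$ is a finite undirected graph without self-loops, $N=|V|$, positive symmetric edge weights $w_{uv}$ ($w_{uv}=0$ for non-edges), degrees $d_u=\sum_v w_{uv}$ (implicitly positive). $|E(A,B)|:=\sum_{u\in A,v\in B}w_{uv}$, $\mathrm{vol}(A):=\sum_{u\in A}d_u$. The normalized Laplacian $\Delta f(u)=\frac{1}{d_u}\sum_v w_{uv}(f(u)-f(v))$ has eigenvalues (with multiplicity) $0=\lambda_1\leq\cdots\leq\lambda_N\leq 2$. A $k$-sub-bipartition is a collection of $k$ pairs $(V_1,V_2),\ldots,(V_{2k-1},V_{2k})$ of pairwise disjoint subsets of $V$ with $V_{2i-1}\cup V_{2i}\neq\emptyset$ for each $i$; for it set $V^*:=V\setminus\bigcup_{i=1}^k(V_{2i-1}\cup V_{2i})$. Define \[ \overline{h}^*(k):=\max\min_{1\leq i\leq k}\frac{2|E(V_{2i-1},V_{2i})|+\frac12|E(V_{2i-1}\cup V_{2i},V^* )|}{\mathrm{vol}(V_{2i-1}\cup V_{2i})}, \] the maximum over all $k$-sub-bipartitions. *)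

From mathcomp Require Import all_boot all_order all_algebra.
From mathcomp Require Import reals.
Set Implicit Arguments. Unset Strict Implicit. Unset Printing Implicit Defensive.
Import Order.TTheory GRing.Theory Num.Theory.
Local Open Scope ring_scope.

Section WeightedGraph.
Variables (R : realType) (V : finType) (w : V -> V -> R).

Definition deg (u : V) : R := \sum_(v : V) w u v.

Definition Ew (A B : {set V}) : R := \sum_(u in A) \sum_(v in B) w u v.

Definition vol (A : {set V}) : R := \sum_(u in A) deg u.

(* Matrix of the normalized Laplacian Delta = I - D^{-1} W, in the basis of
   vertices enumerated by enum_val : 'I_#|V| -> V. *)
Definition nLap : 'M[R]_#|V| :=
  \matrix_(i, j) (((i == j)%:R) - w (enum_val i) (enum_val j) / deg (enum_val i)).

(* s is the nondecreasing list lambda_1 <= ... <= lambda_N of the eigenvalues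
   of Delta, with multiplicity (roots of the characteristic polynomial). *)
Definition eigenvalues_sorted (s : seq R) : Prop :=
  [/\ size s = #|V|, sorted <=%R s &
      char_poly nLap = \prod_(x <- s) ('X - x%:P)].

(* A k-sub-bipartition: pairs (V_{2i-1}, V_{2i}) = P i. *)
Definition sub_bipartition (k : nat) (P : {ffun 'I_k -> {set V} * {set V}}) : bool :=
  [forall i, [disjoint (P i).1 & (P i).2]] &&
  [forall i, [forall j, (i != j) ==>
      [disjoint ((P i).1 :|: (P i).2) & ((P j).1 :|: (P j).2)]]] &&
  [forall i, (P i).1 :|: (P i).2 != set0].

Definition Vstar (k : nat) (P : {ffun 'I_k -> {set V} * {set V}}) : {set V} :=
  ~: \bigcup_(i < k) ((P i).1 :|: (P i).2).

Definition bip_ratio (k : nat) (P : {ffun 'I_k -> {set V} * {set V}}) (i : 'I_k) : R :=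
  (2 * Ew (P i).1 (P i).2 + 2^-1 * Ew ((P i).1 :|: (P i).2) (Vstar P))
    / vol ((P i).1 :|: (P i).2).

End WeightedGraph.

Definition seqmin (R : realType) (s : seq R) : R := foldr Num.min (head 0 s) s.
Definition seqmax (R : realType) (s : seq R) : R := foldr Num.max (head 0 s) s.

Definition bip_value (R : realType) (V : finType) (w : V -> V -> R) (k : nat)
  (P : {ffun 'I_k -> {set V} * {set V}}) : R :=
  seqmin [seq bip_ratio w P i | i <- enum 'I_k].

Definition hstar (R : realType) (V : finType) (w : V -> V -> R) (k : nat) : R :=
  seqmax [seq bip_value w P | P <- enum [pred P : {ffun 'I_k -> {set V} * {set V}}
                                          | sub_bipartition P]].

(* The Courant-Fischer principle bounds lambda_(N-k+1) from below by c as soon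
   as the Rayleigh quotient of the normalized Laplacian is at least c on some
   k-dimensional space of functions.  For a k-sub-bipartition (V_(2i-1), V_(2i))
   take the span of the functions that are 1 on V_(2i-1), -1 on V_(2i) and 0
   elsewhere.  For h = sum_i a_i f_i, the energy sum_(u,v) w_uv |h u - h v|^2
   receives at least |a_i|^2 * 2 (4 |E(V_(2i-1), V_(2i))| + |E(V_(2i-1) u V_(2i), V^* )|)
   from edges inside the i-th pair or between it and V^*, while
   sum_u d_u |h u|^2 = sum_i |a_i|^2 vol(V_(2i-1) u V_(2i)); comparing the two
   gives a Rayleigh quotient at least 2 h^*(k).  MathComp's spectral theorem
   is stated for normal matrices over a closed field, so the symmetrized
   Laplacian D^(1/2) Delta D^(-1/2) is viewed as a matrix over R[i]. *)

From mathcomp Require Import all_boot all_order all_algebra.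
From mathcomp Require Import sesquilinear spectral zify ring lra.
From mathcomp Require Import reals.
From mathcomp.real_closed Require Import complex.
Set Implicit Arguments. Unset Strict Implicit. Unset Printing Implicit Defensive.
Import Order.TTheory GRing.Theory Num.Theory.
Local Open Scope ring_scope.
Local Open Scope sesquilinear_scope.

Lemma char_poly_similar (F : comNzRingType) n (Q P A : 'M[F]_n) :
  Q *m P = 1%:M -> char_poly (Q *m A *m P) = char_poly A.
Proof.
move=> QP.
have QPC : map_mx polyC Q *m map_mx polyC P = 1%:M by rewrite -map_mxM QP map_mx1.
rewrite /char_poly.
have -> : char_poly_mx (Q *m A *m P) =
          map_mx polyC Q *m char_poly_mx A *m map_mx polyC P.
  rewrite /char_poly_mx mulmxBr mulmxBl -!map_mxM.
  by rewrite mul_mx_scalar -scalemxAl QPC scalemx1.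
by rewrite !det_mulmx mulrAC -det_mulmx QPC det1 mul1r.
Qed.

Section CourantFischer.
Variables (C : numClosedFieldType) (n : nat).

Lemma form_diag_sum (z d : 'rV[C]_n) :
  (z *m diag_mx d *m z ^t*) 0 0 = \sum_j z 0 j * d 0 j * (z 0 j)^*.
Proof. by rewrite mul_mx_diag !mxE; apply: eq_bigr => j _; rewrite !mxE. Qed.

Lemma form_id_sum (z : 'rV[C]_n) : (z *m z ^t*) 0 0 = \sum_j z 0 j * (z 0 j)^*.
Proof. by rewrite !mxE; apply: eq_bigr => j _; rewrite !mxE. Qed.

Lemma form_diag_lt (z d : 'rV[C]_n) c : z != 0 ->
  (forall j, z 0 j != 0 -> d 0 j < c) ->
  (z *m diag_mx d *m z ^t*) 0 0 < c * (z *m z ^t*) 0 0.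
Proof.
move=> z0 zd; rewrite form_diag_sum form_id_sum mulr_sumr -subr_gt0 -sumrB.
have gap j : c * (z 0 j * (z 0 j)^*) - z 0 j * d 0 j * (z 0 j)^* =
             (c - d 0 j) * (z 0 j * (z 0 j)^*) by ring.
have [j zj] : exists j, z 0 j != 0.
  apply/existsP; rewrite -negb_forall; apply: contra z0 => /forallP z_eq0.
  by apply/eqP/rowP => j; rewrite mxE; apply/eqP.
rewrite (bigD1 j) //= gap; apply: ltr_pwDl.
  by rewrite mulr_gt0 ?mul_conjC_gt0 // subr_gt0 zd.
apply: sumr_ge0 => i _; rewrite gap.
have [->|zi] := eqVneq (z 0 i) 0; first by rewrite mul0r mulr0.
by rewrite mulr_ge0 ?mul_conjC_ge0 // subr_ge0 ltW // zd.
Qed.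

Lemma exists_nz_submx_vanishing k (G : 'M[C]_(k, n)) (S : {set 'I_n}) :
  row_free G -> (#|~: S| < k)%N ->
  exists2 z : 'rV_n, (z <= G)%MS & z != 0 /\ forall j, j \notin S -> z 0 j = 0.
Proof.
move=> Gfree ltSk.
pose E : 'M[C]_(n, #|~: S|) := \matrix_(j, l) (j == enum_val l)%:R.
have mulE (u : 'rV_n) l : (u *m E) 0 l = u 0 (enum_val l).
  rewrite mxE (bigD1 (enum_val l)) //= !mxE eqxx mulr1 big1 ?addr0 // => i il.
  by rewrite mxE (negbTE il) mulr0.
have GE_nfree : ~~ row_free (G *m E).
  by rewrite -row_leq_rank -ltnNge (leq_ltn_trans (rank_leq_col _)).
pose a := nz_row (kermx (G *m E)).
have a0 : a != 0 by rewrite nz_row_eq0 kermx_eq0.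
have aGE : a *m (G *m E) = 0 by apply/eqP; rewrite -sub_kermx nz_row_sub.
exists (a *m G); first exact: submxMl.
split; first by rewrite mulmx_free_eq0.
move=> j jS; have jSC : j \in ~: S by rewrite inE.
have := congr1 (fun u : 'rV_#|~: S| => u 0 (enum_rank_in jSC j)) aGE.
by rewrite mulmxA mulE enum_rankK_in // => ->; rewrite mxE.
Qed.

Variable M : 'M[C]_n.
Hypothesis M_normal : M \is normalmx.

Local Notation P := (spectralmx M).
Local Notation X := (spectral_diag M).

Lemma spectralmx_mulC : P *m P ^t* = 1%:M.
Proof. exact/unitarymxP/spectral_unitarymx. Qed.

Lemma spectralmx_Cmul : P ^t* *m P = 1%:M.
Proof. by have /unitarymxP := trmxC_unitary P; rewrite trmxCK spectral_unitarymx => ->. Qed.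

Lemma spectral_decomposition : M = P ^t* *m diag_mx X *m P.
Proof.
have /orthomx_spectralP {1}-> := M_normal.
by rewrite invmx_unitary // spectral_unitarymx.
Qed.

Lemma char_poly_spectral : char_poly M = \prod_j ('X - (X 0 j)%:P).
Proof.
rewrite {1}spectral_decomposition char_poly_similar ?spectralmx_Cmul //.
rewrite char_poly_trig ?diag_mx_is_trig //.
by apply: eq_bigr => j _; rewrite mxE eqxx mulr1n.
Qed.

(* Otherwise some nonzero y in the row space of G has spectral coordinates
   supported on the eigenvalues < c, hence a Rayleigh quotient < c. *)
Lemma courant_fischer_count k (G : 'M[C]_(k, n)) c : row_free G ->
  (forall y : 'rV_n, (y <= G)%MS -> c * (y *m y ^t*) 0 0 <= (y *m M *m y ^t*) 0 0) ->
  (k + #|[set j : 'I_n | (X 0 j < c)%R]| <= n)%N.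
Proof.
move=> Gfree Gray; set S := [set j : 'I_n | (X 0 j < c)%R].
rewrite leqNgt; apply/negP => ltn_kS.
have ltSk : (#|~: S| < k)%N by move: ltn_kS; have := cardsC S; rewrite card_ord; lia.
have GPfree : row_free (G *m P ^t*).
  rewrite /row_free mxrankMfree // row_free_unit.
  by apply: unitarymx_unit; rewrite trmxC_unitary spectral_unitarymx.
have [z zG [z0 zS]] := exists_nz_submx_vanishing GPfree ltSk.
have yG : (z *m P <= G)%MS.
  by rewrite -[G]mulmx1 -spectralmx_Cmul mulmxA submxMr.
have := Gray _ yG; have dM := spectral_decomposition.
set Q := spectralmx M in dM *; set D := spectral_diag M in dM zS *.
rewrite dM trmx_mul map_mxM !mulmxA.
rewrite -[z *m Q *m Q ^t*]mulmxA spectralmx_mulC mulmx1.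
rewrite -[z *m diag_mx D *m Q *m Q ^t*]mulmxA spectralmx_mulC mulmx1.
apply/negP; rewrite lt_geF //; apply: form_diag_lt => // j.
by apply: contraR => jS; rewrite zS // inE.
Qed.

Lemma courant_fischer_roots k (G : 'M[C]_(k, n)) c s :
  char_poly M = \prod_(x <- s) ('X - x%:P) -> row_free G ->
  (forall y : 'rV_n, (y <= G)%MS -> c * (y *m y ^t*) 0 0 <= (y *m M *m y ^t*) 0 0) ->
  (k + count (fun x => (x < c)%R) s <= n)%N.
Proof.
move=> charM Gfree Gray.
have perm_s : perm_eq [seq X 0 j | j <- index_enum 'I_n] s.
  by apply: prod_XsubC_eq; rewrite big_map -charM char_poly_spectral.
rewrite -(permP perm_s) count_map -size_filter.
have := courant_fischer_count Gfree Gray.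
by rewrite cardsE cardE /enum_mem [index_enum _]unlock.
Qed.

End CourantFischer.

Section WeightedGraph.
Variables (R : realType) (V : finType) (w : V -> V -> R).
Hypothesis w_sym : forall u v, w u v = w v u.
Hypothesis deg_pos : forall u, 0 < deg w u.

Local Notation n := #|V|.
Local Notation ev := (@enum_val V (mem predT)).
Local Notation toC := (real_complex R).

Lemma conj_toC (x : R) : (toC x)^* = toC x.
Proof. by apply: conj_Creal; rewrite complex_real. Qed.

Lemma sum_enum_val (F : V -> R[i]) : \sum_(j < n) F (ev j) = \sum_u F u.
Proof.
by rewrite [RHS](reindex ev) //; exists enum_rank => x _; [exact: enum_valK | exact: enum_rankK].
Qed.

Definition sqrt_deg (u : V) : R := Num.sqrt (deg w u).

Lemma sqrt_deg_neq0 u : sqrt_deg u != 0.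
Proof. by rewrite gt_eqF // sqrtr_gt0. Qed.

Lemma sqrt_deg_sqr u : sqrt_deg u * sqrt_deg u = deg w u.
Proof. by rewrite -expr2 sqr_sqrtr // ltW. Qed.

(* D^(1/2) (nLap w) D^(-1/2) *)
Definition symLap : 'M[R]_n :=
  \matrix_(i, j) ((i == j)%:R - w (ev i) (ev j) / (sqrt_deg (ev i) * sqrt_deg (ev j))).

Lemma char_poly_symLap : char_poly symLap = char_poly (nLap w).
Proof.
pose Dh : 'M[R]_n := diag_mx (\row_i sqrt_deg (ev i)).
pose Dhi : 'M[R]_n := diag_mx (\row_i (sqrt_deg (ev i))^-1).
have -> : symLap = Dh *m nLap w *m Dhi.
  apply/matrixP => i j; rewrite mul_mx_diag mul_diag_mx !mxE.
  have := sqrt_deg_neq0 (ev i); have := sqrt_deg_neq0 (ev j).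
  rewrite -(sqrt_deg_sqr (ev i)).
  by case: (eqVneq i j) => [->|ij] /= ni nj; field; rewrite ?ni ?nj.
rewrite char_poly_similar // mulmx_diag; apply/matrixP => i j; rewrite !mxE.
by case: (eqVneq i j) => [->|//]; rewrite mulfV ?sqrt_deg_neq0.
Qed.

Lemma symLap_normal : map_mx toC symLap \is normalmx.
Proof.
have symC : (map_mx toC symLap) ^t* = map_mx toC symLap.
  apply/matrixP => i j; rewrite !mxE conj_toC; congr (toC _).
  by rewrite [j == i]eq_sym w_sym [sqrt_deg (ev j) * _]mulrC.
by apply/normalmxP; rewrite symC.
Qed.

Definition deg_row (h : V -> R[i]) : 'rV[R[i]]_n :=
  \row_j (h (ev j) * toC (sqrt_deg (ev j))).

Lemma deg_row_norm h :
  (deg_row h *m (deg_row h) ^t*) 0 0 = \sum_u `|h u| ^+ 2 * toC (deg w u).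
Proof.
rewrite mxE -sum_enum_val; apply: eq_bigr => j _; rewrite !mxE normCK.
by rewrite rmorphM /= conj_toC -(sqrt_deg_sqr (ev j)) rmorphM; ring.
Qed.

Lemma dirichlet_identity (h : V -> R[i]) :
  2 * (\sum_u `|h u| ^+ 2 * toC (deg w u) - \sum_u \sum_v h u * (h v)^* * toC (w u v))
  = \sum_u \sum_v toC (w u v) * `|h u - h v| ^+ 2.
Proof.
pose A u v := toC (w u v) * `|h u| ^+ 2.
pose B u v := h u * (h v)^* * toC (w u v).
have expand u v : toC (w u v) * `|h u - h v| ^+ 2 = A u v - B u v - B v u + A v u.
  by rewrite /A /B !normCK rmorphB /= w_sym; ring.
have swap (F : V -> V -> R[i]) : \sum_u \sum_v F v u = \sum_u \sum_v F u v.
  by rewrite exchange_big.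
have degA : \sum_u \sum_v A u v = \sum_u `|h u| ^+ 2 * toC (deg w u).
  by apply: eq_bigr => u _; rewrite -mulr_suml /deg rmorph_sum mulrC.
symmetry.
under eq_bigr => u _ do rewrite (eq_bigr _ (fun v _ => expand u v)) big_split /= !sumrB.
by rewrite big_split /= !sumrB (swap B) (swap A) degA; ring.
Qed.

Lemma symLap_entry_form (h : V -> R[i]) j l :
  deg_row h 0 j * map_mx toC symLap j l * ((deg_row h) ^t*) l 0 =
  h (ev j) * (h (ev l))^* * ((j == l)%:R * toC (deg w (ev j)) - toC (w (ev j) (ev l))).
Proof.
have scaled : sqrt_deg (ev j) * symLap j l * sqrt_deg (ev l) =
              (j == l)%:R * deg w (ev j) - w (ev j) (ev l).
  rewrite mxE; have := sqrt_deg_neq0 (ev j); have := sqrt_deg_neq0 (ev l).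
  rewrite -(sqrt_deg_sqr (ev j)).
  by case: (eqVneq j l) => [->|jl] /= nl nj; field; rewrite ?nj ?nl.
rewrite [map_mx _ _ _ _]mxE; move: (symLap j l) scaled => L scaled.
rewrite !mxE rmorphM /= conj_toC.
by rewrite -(rmorph_nat toC) -rmorphM -rmorphB -scaled !rmorphM; ring.
Qed.

Lemma symLap_form (h : V -> R[i]) :
  2 * (deg_row h *m map_mx toC symLap *m (deg_row h) ^t*) 0 0 =
  \sum_u \sum_v toC (w u v) * `|h u - h v| ^+ 2.
Proof.
rewrite -dirichlet_identity; congr (2 * _).
have diag : \sum_u `|h u| ^+ 2 * toC (deg w u) =
    \sum_j \sum_l h (ev j) * (h (ev l))^* * ((j == l)%:R * toC (deg w (ev j))).
  rewrite -sum_enum_val; apply: eq_bigr => j _; rewrite (bigD1 j) //= big1 ?addr0.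
    by rewrite eqxx mul1r normCK.
  by move=> l lj; rewrite eq_sym (negbTE lj) mul0r mulr0.
have offdiag : \sum_u \sum_v h u * (h v)^* * toC (w u v) =
    \sum_j \sum_l h (ev j) * (h (ev l))^* * toC (w (ev j) (ev l)).
  rewrite -sum_enum_val; apply: eq_bigr => j _.
  by rewrite -(sum_enum_val (fun v => h (ev j) * (h v)^* * toC (w (ev j) v))).
rewrite diag offdiag -sumrB mxE.
under eq_bigr => l _ do rewrite mxE mulr_suml.
rewrite exchange_big /=; apply: eq_bigr => j _; rewrite -sumrB; apply: eq_bigr => l _.
by rewrite symLap_entry_form mulrBr.
Qed.

Lemma Ew_indicator (A B : {set V}) :
  \sum_u \sum_v w u v * ((u \in A)%:R * (v \in B)%:R) = Ew w A B.
Proof.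
rewrite /Ew [RHS]big_mkcond; apply: eq_bigr => u _.
case: (u \in A) => /=; last by rewrite big1 // => v _; rewrite mul0r mulr0.
rewrite [RHS]big_mkcond; apply: eq_bigr => v _.
by case: (v \in B); rewrite ?mul1r ?mulr1 ?mulr0.
Qed.

Lemma EwC (A B : {set V}) : Ew w A B = Ew w B A.
Proof. by rewrite /Ew exchange_big; apply: eq_bigr => v _; apply: eq_bigr => u _; rewrite w_sym. Qed.

Lemma vol_indicator (A : {set V}) : \sum_u (u \in A)%:R * deg w u = vol w A.
Proof.
rewrite /vol [RHS]big_mkcond; apply: eq_bigr => u _.
by case: (u \in A); rewrite ?mul1r ?mul0r.
Qed.

End WeightedGraph.

Section SubBipartition.
Variables (R : realType) (V : finType) (w : V -> V -> R).
Variables (k : nat) (P : {ffun 'I_k -> {set V} * {set V}}).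
Hypothesis P_sub : sub_bipartition P.

Local Notation ev := (@enum_val V (mem predT)).
Local Notation toC := (real_complex R).
Local Notation S i := ((P i).1 :|: (P i).2).
Local Notation Vs := (Vstar P).

Lemma disjoint_parts i : [disjoint (P i).1 & (P i).2].
Proof. by case/andP: P_sub => /andP[/forallP] + _ _; apply. Qed.

Lemma part_eq i j u : u \in S i -> u \in S j -> i = j.
Proof.
move=> ui uj; apply/eqP; apply: contraT => ij.
case/andP: P_sub => /andP[_ /forallP/(_ i)/forallP/(_ j)/implyP/(_ ij)] + _.
by move=> /disjointFr/(_ ui); rewrite uj.
Qed.

Lemma part_neq0 i : S i != set0.
Proof. by case/andP: P_sub => _ /forallP. Qed.

Lemma in_Vstar u : (u \in Vs) = [forall i, u \notin S i].
Proof.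
rewrite in_setC; apply/idP/forallP => [uVs i | uS].
  by apply: contra uVs => ui; apply/bigcupP; exists i.
by apply/bigcupP => -[i _ ui]; move: (uS i); rewrite ui.
Qed.

Lemma Vstar_notin u i : u \in Vs -> u \notin S i.
Proof. by rewrite in_Vstar => /forallP. Qed.

Lemma notin_VstarP u : reflect (exists i, u \in S i) (u \notin Vs).
Proof.
by rewrite in_Vstar negb_forall; apply: (iffP existsP) => -[i ui]; exists i; rewrite ?negbK in ui *.
Qed.

Lemma Vstar_in_part i u : u \in S i -> (u \in Vs) = false.
Proof. by move=> ui; apply/negbTE/negP => /(Vstar_notin i); rewrite ui. Qed.

Lemma notin_parts i u : u \notin S i -> (u \in (P i).1) = false /\ (u \in (P i).2) = false.
Proof. by rewrite in_setU negb_or => /andP[/negbTE -> /negbTE ->]. Qed.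

Definition part_sign i u : R := (u \in (P i).1)%:R - (u \in (P i).2)%:R.

Lemma part_sign_out i u : u \notin S i -> part_sign i u = 0.
Proof. by move=> /notin_parts[u1 u2]; rewrite /part_sign u1 u2 subrr. Qed.

Lemma part_sign_sqr i u : u \in S i -> part_sign i u ^+ 2 = 1.
Proof.
rewrite inE /part_sign => /orP[u1|u2].
  by rewrite u1 (disjointFr (disjoint_parts i) u1) subr0 expr1n.
by rewrite u2 (disjointFl (disjoint_parts i) u2) sub0r sqrrN expr1n.
Qed.

Lemma sqr_norm_scale (a : R[i]) (x : R) : `|a * toC x| ^+ 2 = `|a| ^+ 2 * toC (x ^+ 2).
Proof. by rewrite !normCK rmorphM /= conj_toC rmorphXn /=; ring. Qed.

Definition test_fun (a : 'rV[R[i]]_k) (u : V) : R[i] := \sum_i a 0 i * toC (part_sign i u).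

Lemma test_fun_in a i u : u \in S i -> test_fun a u = a 0 i * toC (part_sign i u).
Proof.
move=> ui; rewrite /test_fun (bigD1 i) //= big1 ?addr0 // => l li.
rewrite part_sign_out ?rmorph0 ?mulr0 //; apply: contra li => ul.
by apply/eqP; apply: part_eq ul ui.
Qed.

Lemma test_fun_Vstar a u : u \in Vs -> test_fun a u = 0.
Proof.
by move=> uVs; rewrite /test_fun big1 // => i _; rewrite part_sign_out ?rmorph0 ?mulr0 ?Vstar_notin.
Qed.

Lemma sqr_norm_test_fun a u :
  `|test_fun a u| ^+ 2 = \sum_i `|a 0 i| ^+ 2 * (u \in S i)%:R.
Proof.
have [uVs|/notin_VstarP[i ui]] := boolP (u \in Vs).
  rewrite test_fun_Vstar // normr0 expr0n /= big1 // => i _.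
  by rewrite (negbTE (Vstar_notin i uVs)) mulr0.
rewrite (test_fun_in a ui) sqr_norm_scale part_sign_sqr // (bigD1 i) //= ui big1 ?addr0.
  by rewrite rmorph1.
move=> l li; have ul : u \notin S l by apply: contra li => ul; apply/eqP/(part_eq ul ui).
by rewrite (negbTE ul) mulr0.
Qed.

Definition test_mx : 'M[R[i]]_(k, #|V|) :=
  \matrix_(i, j) toC (part_sign i (ev j) * sqrt_deg w (ev j)).

Lemma mul_test_mx a : a *m test_mx = deg_row w (test_fun a).
Proof.
apply/rowP => j; rewrite !mxE /test_fun mulr_suml.
by apply: eq_bigr => i _; rewrite !mxE rmorphM mulrA.
Qed.

Hypothesis deg_pos : forall u, 0 < deg w u.

Lemma test_mx_row_free : row_free test_mx.
Proof.
apply/inj_row_free => a; rewrite mul_test_mx => /rowP a0; apply/rowP => i; rewrite mxE.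
have /set0Pn[u ui] := part_neq0 i.
move: (a0 (enum_rank u)); rewrite !mxE enum_rankK => /eqP.
rewrite mulf_eq0 fmorph_eq0 (negbTE (sqrt_deg_neq0 deg_pos u)) orbF => /eqP t0.
have := sqr_norm_test_fun a u; rewrite t0 normr0 expr0n /= (bigD1 i) //= ui mulr1.
move/esym/eqP; rewrite paddr_eq0 ?exprn_ge0 ?sumr_ge0 // => [/andP[]|l _].
  by rewrite sqrf_eq0 normr_eq0 => /eqP.
by rewrite mulr_ge0 ?exprn_ge0.
Qed.

(* 4 = (1 - (-1))^2 on edges between the two parts of the i-th pair, and 1 on
   edges between the pair and V^*. *)
Definition cut_weight i u v : R :=
  4 * ((u \in (P i).1)%:R * (v \in (P i).2)%:R + (u \in (P i).2)%:R * (v \in (P i).1)%:R)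
  + (u \in S i)%:R * (v \in Vs)%:R + (u \in Vs)%:R * (v \in S i)%:R.

Lemma cut_weightC i u v : cut_weight i u v = cut_weight i v u.
Proof. by rewrite /cut_weight; ring. Qed.

Lemma cut_weight_out i u v : u \notin S i -> u \notin Vs -> cut_weight i u v = 0.
Proof.
move=> ui uVs; have [u1 u2] := notin_parts ui.
by rewrite /cut_weight u1 u2 (negbTE ui) (negbTE uVs) /= !(mulr0n, mul0r, addr0, mulr0).
Qed.

Lemma cut_weight_out2 i u v : u \notin S i -> v \notin S i -> cut_weight i u v = 0.
Proof.
move=> ui vi; have [u1 u2] := notin_parts ui.
by rewrite /cut_weight u1 u2 (negbTE ui) (negbTE vi) /= !(mulr0n, mul0r, addr0, mulr0).
Qed.

Lemma cut_weight_in i u v : u \in S i -> v \in S i ->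
  cut_weight i u v <= (part_sign i u - part_sign i v) ^+ 2.
Proof.
move=> ui vi; rewrite /cut_weight /part_sign (Vstar_in_part ui) (Vstar_in_part vi) !mulr0 !mul0r !addr0.
have part12 x : ~~ ((x \in (P i).1) && (x \in (P i).2)).
  by apply/negP => /andP[x1]; rewrite (disjointFr (disjoint_parts i) x1).
move: (part12 u) (part12 v).
by case: (u \in (P i).1); case: (u \in (P i).2); case: (v \in (P i).1);
  case: (v \in (P i).2) => //= _ _; lra.
Qed.

Lemma cut_weight_Vstar i u v : u \in S i -> v \notin S i -> cut_weight i u v = (v \in Vs)%:R.
Proof.
move=> ui vi; have [v1 v2] := notin_parts vi.
rewrite /cut_weight v1 v2 (negbTE vi) ui (Vstar_in_part ui).
by rewrite /= !(mulr0n, mulr1n, mulr0, mul0r, addr0, add0r, mul1r).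
Qed.

Lemma test_fun_diff (a : 'rV[R[i]]_k) u v :
  \sum_i `|a 0 i| ^+ 2 * toC (cut_weight i u v) <= `|test_fun a u - test_fun a v| ^+ 2.
Proof.
wlog /notin_VstarP[i ui] : u v / u \notin Vs.
  move=> gen; have [uVs|] := boolP (u \in Vs); last exact: gen.
  have [vVs|vVs] := boolP (v \in Vs); last first.
    by under eq_bigr do rewrite cut_weightC; rewrite distrC; apply: gen.
  rewrite big1 ?exprn_ge0 // => i _.
  by rewrite cut_weight_out2 ?Vstar_notin // rmorph0 mulr0.
rewrite (bigD1 i) //= big1 ?addr0; last first.
  move=> l li; rewrite cut_weight_out ?rmorph0 ?mulr0 ?(Vstar_in_part ui) //.
  by apply: contra li => ul; apply/eqP/(part_eq ul ui).
rewrite (test_fun_in a ui).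
have [vi|vi] := boolP (v \in S i).
  rewrite (test_fun_in a vi) -mulrBr -rmorphB sqr_norm_scale.
  by rewrite ler_wpM2l ?exprn_ge0 // lecR cut_weight_in.
rewrite cut_weight_Vstar //; have [vVs|vVs] := boolP (v \in Vs).
  by rewrite test_fun_Vstar // subr0 sqr_norm_scale part_sign_sqr.
by rewrite rmorph0 mulr0 exprn_ge0.
Qed.

Hypothesis w_sym : forall u v, w u v = w v u.
Hypothesis w_ge0 : forall u v, 0 <= w u v.

Lemma sum_cut_weight i : \sum_u \sum_v w u v * cut_weight i u v =
  2 * (4 * Ew w (P i).1 (P i).2 + Ew w (S i) Vs).
Proof.
have split_cut u v : w u v * cut_weight i u v =
    4 * (w u v * ((u \in (P i).1)%:R * (v \in (P i).2)%:R))
  + 4 * (w u v * ((u \in (P i).2)%:R * (v \in (P i).1)%:R))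
  + w u v * ((u \in S i)%:R * (v \in Vs)%:R)
  + w u v * ((u \in Vs)%:R * (v \in S i)%:R).
  by rewrite /cut_weight; ring.
under eq_bigr => u _ do rewrite (eq_bigr _ (fun v _ => split_cut u v)) !big_split /= -!mulr_sumr.
rewrite !big_split /= -!mulr_sumr !Ew_indicator (EwC w_sym (P i).2) (EwC w_sym Vs).
ring.
Qed.

Lemma test_fun_norm (a : 'rV[R[i]]_k) : \sum_u `|test_fun a u| ^+ 2 * toC (deg w u) =
  \sum_i `|a 0 i| ^+ 2 * toC (vol w (S i)).
Proof.
under eq_bigr => u _ do rewrite sqr_norm_test_fun mulr_suml.
rewrite exchange_big /=; apply: eq_bigr => i _.
rewrite -vol_indicator rmorph_sum mulr_sumr; apply: eq_bigr => u _.
by rewrite rmorphM rmorph_nat mulrA.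
Qed.

Lemma test_fun_energy (a : 'rV[R[i]]_k) :
  \sum_i `|a 0 i| ^+ 2 * toC (2 * (4 * Ew w (P i).1 (P i).2 + Ew w (S i) Vs)) <=
  \sum_u \sum_v toC (w u v) * `|test_fun a u - test_fun a v| ^+ 2.
Proof.
rewrite [leLHS](_ : _ = \sum_u \sum_v toC (w u v) *
    \sum_i `|a 0 i| ^+ 2 * toC (cut_weight i u v)).
  apply: ler_sum => u _; apply: ler_sum => v _.
  by rewrite ler_wpM2l ?test_fun_diff // lecR.
under [RHS]eq_bigr => u _ do under eq_bigr => v _ do rewrite mulr_sumr.
under [RHS]eq_bigr => u _ do rewrite exchange_big.
rewrite [RHS]exchange_big /=; apply: eq_bigr => i _.
rewrite -sum_cut_weight !rmorph_sum mulr_sumr; apply: eq_bigr => u _.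
rewrite rmorph_sum mulr_sumr; apply: eq_bigr => v _.
by rewrite rmorphM; ring.
Qed.

Lemma bip_ratio_bound hs i : hs <= bip_ratio w P i ->
  2 * hs * vol w (S i) <= 4 * Ew w (P i).1 (P i).2 + Ew w (S i) Vs.
Proof.
have vol_gt0 : 0 < vol w (S i).
  have /set0Pn [u ui] := part_neq0 i.
  rewrite /vol (bigD1 u) //=; apply: (lt_le_trans (deg_pos u)).
  by rewrite lerDl sumr_ge0 // => v _; apply: ltW.
rewrite /bip_ratio ler_pdivlMr // => le_hs.
by have := ler_wpM2l (ler0n R 2) le_hs; lra.
Qed.

Lemma test_mx_rayleigh hs : (forall i, hs <= bip_ratio w P i) ->
  forall y : 'rV_#|V|, (y <= test_mx)%MS ->
  toC (2 * hs) * (y *m y ^t*) 0 0 <= (y *m map_mx toC (symLap w) *m y ^t*) 0 0.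
Proof.
move=> hs_le y /submxP[a ->]; rewrite mul_test_mx deg_row_norm // (test_fun_norm a).
rewrite -(ler_pM2l (ltr0n _ 2)) symLap_form //; apply: le_trans (test_fun_energy a).
rewrite mulr_sumr mulr_sumr; apply: ler_sum => i _.
have -> : 2 * (toC (2 * hs) * (`|a 0 i| ^+ 2 * toC (vol w (S i)))) =
          `|a 0 i| ^+ 2 * toC (2 * (2 * hs * vol w (S i))).
  by rewrite !rmorphM rmorph_nat; ring.
by rewrite ler_wpM2l ?exprn_ge0 // lecR ler_wpM2l // bip_ratio_bound.
Qed.

End SubBipartition.

Lemma foldr_max_mem (R : realType) (x0 : R) (t : seq R) : foldr Num.max x0 t \in x0 :: t.
Proof.
elim: t => [|a t IH] /=; first by rewrite mem_seq1.
rewrite /Num.max; case: ifP => _; last by rewrite !inE eqxx orbT.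
by move: IH; rewrite !inE => /orP[->|->]; rewrite ?orbT.
Qed.

Lemma seqmax_mem (R : realType) (s : seq R) : s != [::] -> seqmax s \in s.
Proof.
case: s => [//|a t] _; have := foldr_max_mem a (a :: t).
by rewrite /seqmax /= !inE; case/orP=> [/eqP ->|->]; rewrite ?eqxx ?orbT.
Qed.

Lemma seqmin_le (R : realType) (s : seq R) x : x \in s -> seqmin s <= x.
Proof.
rewrite /seqmin; elim: s (head 0 s) => [//|a t IH] x0 /=.
rewrite inE => /orP[/eqP ->|xt]; first by rewrite ge_min lexx.
by rewrite ge_min (IH x0 xt) orbT.
Qed.

Section Hstar.
Variables (R : realType) (V : finType) (w : V -> V -> R) (k : nat).
Hypothesis hkN : (k <= #|V|)%N.

Lemma exists_sub_bipartition : exists P : {ffun 'I_k -> {set V} * {set V}}, sub_bipartition P.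
Proof.
pose u (i : 'I_k) := @enum_val V (mem predT) (widen_ord hkN i).
exists [ffun i => ([set u i], set0)].
apply/andP; split; first (apply/andP; split).
- by apply/forallP => i; rewrite ffunE disjoints1 in_set0.
- apply/forallP => i; apply/forallP => j; apply/implyP => ij.
  rewrite !ffunE /= !setU0 disjoints1 inE.
  by apply: contra ij => /eqP/enum_val_inj/(congr1 val) /= /val_inj ->.
- by apply/forallP => i; rewrite ffunE /= setU0; apply/set0Pn; exists (u i); rewrite inE.
Qed.

Lemma hstar_attained : exists2 P : {ffun 'I_k -> {set V} * {set V}},
  sub_bipartition P & forall i, hstar w k <= bip_ratio w P i.
Proof.
have [P0 P0_sub] := exists_sub_bipartition.
rewrite /hstar; set L := (X in seqmax X).
have P0L : bip_value w P0 \in L by rewrite map_f // mem_enum.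
have /seqmax_mem/mapP[P] : L != [::] by apply: contraTneq P0L => ->.
rewrite mem_enum => P_sub ->; exists P => // i.
by apply: seqmin_le; rewrite map_f // mem_enum.
Qed.

End Hstar.

Theorem theorem4p1 (R : realType) (V : finType) (w : V -> V -> R)
  (w_sym : forall u v, w u v = w v u)
  (w_ge0 : forall u v, 0 <= w u v)
  (w_loop : forall u, w u u = 0)
  (deg_pos : forall u, 0 < deg w u)
  (s : seq R) (hs : eigenvalues_sorted w s)
  (k : nat) (hk1 : (1 <= k)%N) (hkN : (k <= #|V|)%N) :
  s`_(#|V| - k) >= 2 * hstar w k.
Proof.
case: hs => size_s sorted_s char_s.
have [P P_sub hstar_le] := hstar_attained w hkN.
have charC : char_poly (map_mx (real_complex R) (symLap w)) =
             \prod_(x <- map (real_complex R) s) ('X - x%:P).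
  rewrite -map_char_poly char_poly_symLap // char_s rmorph_prod big_map.
  by apply: eq_bigr => x _; rewrite /= map_polyXsubC.
have := courant_fischer_roots (symLap_normal w_sym) charC
  (test_mx_row_free P_sub deg_pos) (test_mx_rayleigh P_sub deg_pos w_sym w_ge0 hstar_le).
rewrite count_map (eq_count (fun x => ltcR x _)) => count_le.
by rewrite nth_count_ge // size_s leq_subRL // count_le ltn_subrL hk1 (leq_trans hk1 hkN).
Qed.
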